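(* Let $\phi$ be a smooth function on an open subset of the $x$-$y$ plane such that $X(x,y)=(x,y,\phi(x,y))$ is a timelike minimal surface in $\mathbb{L}^3$ without singularities. Then, locally (near each point), $X$ can be written as a graph of the form $(x,\psi(x,z),z)$ or of the form $(\psi(y,z),y,z)$, where $\psi$ is a Born-Infeld soliton (in the variables $(x,z)$, respectively $(y,z)$).
   Context: $\mathbb{L}^3$ denotes $\mathbb{R}^3$ with the Lorentzian metric $ds^2=dx^2+dy^2-dz^2$. A surface is timelike if its induced metric is Lorentzian (equivalently, its unit normal is spacelike), and minimal if its mean curvature vanishes; ''without singularities'' means the map is an immersion whose induced metric is nondegenerate (timelike) everywhere. A function $\psi$ defined on an open set $\Omega$ of the $(u,v)$-plane is a Born-Infeld soliton (in the variables $u,v$) if it satisfies the Born-Infeld equation $(1-\psi_v^2)\psi_{uu}+2\psi_u\psi_v\psi_{uv}-(1+\psi_u^2)\psi_{vv}=0$. *)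

From Stdlib Require Import Reals List.
From Coquelicot Require Import Coquelicot.
Open Scope R_scope.

Definition open2 (D : R -> R -> Prop) : Prop :=
  open (fun p : R * R => D (fst p) (snd p)).

Definition pd1 (f : R -> R -> R) (u v : R) : R := Derive (fun t => f t v) u.
Definition pd2 (f : R -> R -> R) (u v : R) : R := Derive (fun t => f u t) v.

Inductive dir := D1 | D2.

Fixpoint iter_pd (ds : list dir) (f : R -> R -> R) : R -> R -> R :=
  match ds with
  | nil => f
  | D1 :: ds' => pd1 (iter_pd ds' f)
  | D2 :: ds' => pd2 (iter_pd ds' f)
  end.

Definition smooth_on (D : R -> R -> Prop) (f : R -> R -> R) : Prop :=
  forall (ds : list dir) (u v : R), D u v ->
    let g := iter_pd ds f in
    ex_derive (fun t => g t v) u /\ ex_derive (fun t => g u t) v /\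
    continuous (fun p : R * R => g (fst p) (snd p)) (u, v).

Definition vec3 := (R * R * R)%type.
Definition v1 (a : vec3) : R := fst (fst a).
Definition v2 (a : vec3) : R := snd (fst a).
Definition v3 (a : vec3) : R := snd a.

Definition ldot (a b : vec3) : R := v1 a * v1 b + v2 a * v2 b - v3 a * v3 b.

(** Lorentzian cross product: ldot (lcross a b) a = ldot (lcross a b) b = 0 *)
Definition lcross (a b : vec3) : vec3 :=
  (v2 a * v3 b - v3 a * v2 b,
   v3 a * v1 b - v1 a * v3 b,
   - (v1 a * v2 b - v2 a * v1 b)).

Definition vscale (c : R) (a : vec3) : vec3 := (c * v1 a, c * v2 a, c * v3 a).

Definition surface := R -> R -> vec3.

Definition Xu (X : surface) (u v : R) : vec3 :=
  (pd1 (fun a b => v1 (X a b)) u v, pd1 (fun a b => v2 (X a b)) u v,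
   pd1 (fun a b => v3 (X a b)) u v).
Definition Xv (X : surface) (u v : R) : vec3 :=
  (pd2 (fun a b => v1 (X a b)) u v, pd2 (fun a b => v2 (X a b)) u v,
   pd2 (fun a b => v3 (X a b)) u v).
Definition Xuu (X : surface) := Xu (Xu X).
Definition Xuv (X : surface) := Xv (Xu X).
Definition Xvv (X : surface) := Xv (Xv X).

Definition fE (X : surface) u v := ldot (Xu X u v) (Xu X u v).
Definition fF (X : surface) u v := ldot (Xu X u v) (Xv X u v).
Definition fG (X : surface) u v := ldot (Xv X u v) (Xv X u v).

(** [X] is an immersion on [D] whose induced metric is Lorentzian
    (timelike surface without singularities). *)
Definition timelike_surface (D : R -> R -> Prop) (X : surface) : Prop :=
  forall u v, D u v ->
    lcross (Xu X u v) (Xv X u v) <> (0, 0, 0) /\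
    fE X u v * fG X u v - fF X u v ^ 2 < 0.

Definition unit_normal (X : surface) (u v : R) : vec3 :=
  let n := lcross (Xu X u v) (Xv X u v) in
  vscale (/ sqrt (Rabs (ldot n n))) n.

Definition sL (X : surface) u v := ldot (Xuu X u v) (unit_normal X u v).
Definition sM (X : surface) u v := ldot (Xuv X u v) (unit_normal X u v).
Definition sN (X : surface) u v := ldot (Xvv X u v) (unit_normal X u v).

Definition mean_curvature (X : surface) (u v : R) : R :=
  (fE X u v * sN X u v - 2 * fF X u v * sM X u v + fG X u v * sL X u v)
  / (2 * (fE X u v * fG X u v - fF X u v ^ 2)).

Definition minimal_surface (D : R -> R -> Prop) (X : surface) : Prop :=
  forall u v, D u v -> mean_curvature X u v = 0.

Definition graph_z (phi : R -> R -> R) : surface := fun x y => (x, y, phi x y).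

Definition born_infeld (D : R -> R -> Prop) (psi : R -> R -> R) : Prop :=
  forall u v, D u v ->
    (1 - pd2 psi u v ^ 2) * pd1 (pd1 psi) u v
    + 2 * pd1 psi u v * pd2 psi u v * pd2 (pd1 psi) u v
    - (1 + pd1 psi u v ^ 2) * pd2 (pd2 psi) u v = 0.

From Stdlib Require Import Reals Lra Psatz List ClassicalEpsilon FunctionalExtensionality.
From Coquelicot Require Import Coquelicot.
Open Scope R_scope.

(* For a graph z = phi(x, y) the timelike condition reads phi_x^2 + phi_y^2 > 1,
   and vanishing mean curvature reads
     (1 - phi_y^2) phi_xx + 2 phi_x phi_y phi_xy + (1 - phi_x^2) phi_yy = 0.
   Hence phi_x or phi_y is nonzero; exchanging x and y we may assume phi_y <> 0.
   Since phi is strictly monotone in y near the point, z = phi(x, y) is solved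
   there by y = psi(x, z), and psi is smooth because its partial derivatives
   psi_x = - phi_x / phi_y and psi_z = 1 / phi_y are smooth functions of
   (x, psi(x, z)).  Differentiating once more, the Born-Infeld expression of psi
   at (x, z) equals the minimal-graph expression of phi at (x, psi(x, z)) divided
   by phi_y^3, hence vanishes. *)

Definition partials_cont_at (f : R -> R -> R) (u v : R) : Prop :=
  ex_derive (fun t => f t v) u /\ ex_derive (fun t => f u t) v /\
  continuity_2d_pt f u v.

Lemma open2_locally_2d D : open2 D <-> forall x y, D x y -> locally_2d D x y.
Proof.
  unfold open2, open; split.
  - intros H x y Hxy. apply locally_2d_locally. exact (H (x, y) Hxy).
  - intros H [x y] Hxy. apply locally_2d_locally. exact (H x y Hxy).
Qed.

Lemma open2_locally_1 D x y : open2 D -> D x y -> locally x (fun t => D t y).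
Proof. intros HD Hxy. apply locally_2d_1d_const_y. now apply open2_locally_2d. Qed.

Lemma open2_locally_2 D x y : open2 D -> D x y -> locally y (fun t => D x t).
Proof. intros HD Hxy. apply locally_2d_1d_const_x. now apply open2_locally_2d. Qed.

Lemma continuous_pair_2d f u v :
  continuous (fun p : R * R => f (fst p) (snd p)) (u, v) <-> continuity_2d_pt f u v.
Proof. rewrite continuity_2d_pt_filterlim. reflexivity. Qed.

Lemma continuity_2d_pt_1 (f : R -> R -> R) x y :
  continuity_2d_pt f x y -> continuity_pt (fun t => f t y) x.
Proof.
  intros Hc eps Heps. destruct (Hc (mkposreal _ Heps)) as [del Hdel].
  exists del; split; [apply cond_pos|]. intros t [_ Ht]. simpl in *. unfold Rdist in *.
  apply Hdel; auto. rewrite Rminus_diag, Rabs_R0; apply cond_pos.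
Qed.

Lemma continuity_2d_pt_2 (f : R -> R -> R) x y :
  continuity_2d_pt f x y -> continuity_pt (fun t => f x t) y.
Proof.
  intros Hc eps Heps. destruct (Hc (mkposreal _ Heps)) as [del Hdel].
  exists del; split; [apply cond_pos|]. intros t [_ Ht]. simpl in *. unfold Rdist in *.
  apply Hdel; auto. rewrite Rminus_diag, Rabs_R0; apply cond_pos.
Qed.

Lemma smooth_on_iff D f :
  smooth_on D f <-> forall ds u v, D u v -> partials_cont_at (iter_pd ds f) u v.
Proof.
  unfold smooth_on, partials_cont_at; split; intros H ds u v Huv;
    destruct (H ds u v Huv) as [H1 [H2 H3]]; repeat split; auto;
    now apply continuous_pair_2d.
Qed.

Lemma smooth_on_partials_cont D f u v : smooth_on D f -> D u v -> partials_cont_at f u v.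
Proof. intros Hf Huv. exact (proj1 (smooth_on_iff D f) Hf nil u v Huv). Qed.

Lemma smooth_on_continuity D f u v : smooth_on D f -> D u v -> continuity_2d_pt f u v.
Proof. intros Hf Huv. apply (smooth_on_partials_cont D f u v Hf Huv). Qed.

Lemma smooth_on_sub D D' f :
  smooth_on D f -> (forall x y, D' x y -> D x y) -> smooth_on D' f.
Proof. intros Hf HD ds u v Huv. apply Hf, HD, Huv. Qed.

Lemma iter_pd_app1 ds f : iter_pd (ds ++ D1 :: nil) f = iter_pd ds (pd1 f).
Proof. induction ds as [|[] ds IH]; simpl; rewrite ?IH; reflexivity. Qed.

Lemma iter_pd_app2 ds f : iter_pd (ds ++ D2 :: nil) f = iter_pd ds (pd2 f).
Proof. induction ds as [|[] ds IH]; simpl; rewrite ?IH; reflexivity. Qed.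

Lemma smooth_on_pd1 D f : smooth_on D f -> smooth_on D (pd1 f).
Proof. intros Hf ds u v Huv. rewrite <- iter_pd_app1. apply Hf, Huv. Qed.

Lemma smooth_on_pd2 D f : smooth_on D f -> smooth_on D (pd2 f).
Proof. intros Hf ds u v Huv. rewrite <- iter_pd_app2. apply Hf, Huv. Qed.

Lemma smooth_on_of_pd_closed D (C : (R -> R -> R) -> Prop) :
  (forall f u v, C f -> D u v -> partials_cont_at f u v) ->
  (forall f, C f -> C (pd1 f)) -> (forall f, C f -> C (pd2 f)) ->
  forall f, C f -> smooth_on D f.
Proof.
  intros Hpc H1 H2 f Hf. apply smooth_on_iff. intros ds u v Huv. apply Hpc; auto.
  induction ds as [|[] ds IH]; simpl; auto.
Qed.

Lemma iter_pd_ext_on D f g : open2 D -> (forall x y, D x y -> f x y = g x y) ->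
  forall ds x y, D x y -> iter_pd ds f x y = iter_pd ds g x y.
Proof.
  intros HD Hfg ds; induction ds as [|[] ds IH]; intros x y Hxy; simpl; auto;
    unfold pd1, pd2; apply Derive_ext_loc.
  - generalize (open2_locally_1 D x y HD Hxy); apply filter_imp; auto.
  - generalize (open2_locally_2 D x y HD Hxy); apply filter_imp; auto.
Qed.

Lemma pd1_ext_on D f g x y : open2 D -> (forall x y, D x y -> f x y = g x y) ->
  D x y -> pd1 f x y = pd1 g x y.
Proof. intros HD Hfg. exact (iter_pd_ext_on D f g HD Hfg (D1 :: nil) x y). Qed.

Lemma pd2_ext_on D f g x y : open2 D -> (forall x y, D x y -> f x y = g x y) ->
  D x y -> pd2 f x y = pd2 g x y.
Proof. intros HD Hfg. exact (iter_pd_ext_on D f g HD Hfg (D2 :: nil) x y). Qed.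

Lemma partials_cont_at_ext_on D f g u v : open2 D ->
  (forall x y, D x y -> f x y = g x y) -> D u v ->
  partials_cont_at f u v -> partials_cont_at g u v.
Proof.
  intros HD Hfg Huv [H1 [H2 H3]]; split; [|split].
  - apply ex_derive_ext_loc with (2 := H1).
    generalize (open2_locally_1 D u v HD Huv); apply filter_imp; auto.
  - apply ex_derive_ext_loc with (2 := H2).
    generalize (open2_locally_2 D u v HD Huv); apply filter_imp; auto.
  - apply continuity_2d_pt_ext_loc with (2 := H3).
    apply locally_2d_impl with (2 := proj1 (open2_locally_2d D) HD u v Huv).
    apply locally_2d_forall. exact Hfg.
Qed.

Lemma smooth_on_ext D f g : open2 D -> smooth_on D f ->
  (forall x y, D x y -> f x y = g x y) -> smooth_on D g.
Proof.
  intros HD Hf Hfg. apply smooth_on_iff. intros ds u v Huv.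
  apply (partials_cont_at_ext_on D (iter_pd ds f)); [exact HD| |exact Huv|].
  - intros x y Hxy. exact (iter_pd_ext_on D f g HD Hfg ds x y Hxy).
  - exact (proj1 (smooth_on_iff D f) Hf ds u v Huv).
Qed.

Lemma smooth_on_ex_diff_n D f : smooth_on D f -> forall n u v, D u v -> ex_diff_n f n u v.
Proof.
  intros Hf n; revert f Hf; induction n as [|n IH]; intros f Hf u v Huv;
    destruct (smooth_on_partials_cont D f u v Hf Huv) as [H1 [H2 H3]].
  - split; [exact H3|exact I].
  - simpl; repeat split; [exact H3|exact H1|exact H2| |].
    + exact (IH (pd1 f) (smooth_on_pd1 D f Hf) u v Huv).
    + exact (IH (pd2 f) (smooth_on_pd2 D f Hf) u v Huv).
Qed.

Lemma DL_pol_1 f x y dx dy :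
  DL_pol 1 f x y dx dy = f x y + dx * pd1 f x y + dy * pd2 f x y.
Proof.
  unfold DL_pol, differential, pd1, pd2, partial_derive, Binomial.C; simpl. field.
Qed.

(* The first-order Taylor-Lagrange bound [K m^2] is [o(m)]. *)
Lemma smooth_on_differentiable D f x y : open2 D -> smooth_on D f -> D x y ->
  differentiable_pt_lim f x y (pd1 f x y) (pd2 f x y).
Proof.
  intros HD Hf Hxy.
  assert (H : DL_regular_n f 1 x y).
  { apply Taylor_Lagrange_2d.
    destruct (proj1 (open2_locally_2d D) HD x y Hxy) as [d Hd].
    exists d; intros u v Hu Hv. exact (smooth_on_ex_diff_n D f Hf 2 u v (Hd u v Hu Hv)). }
  destruct H as [K [d Hd]].
  intros eps.
  assert (HK : 0 < eps / (Rabs K + 1)).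
  { apply Rdiv_lt_0_compat; [apply cond_pos|]. generalize (Rabs_pos K); lra. }
  exists (mkposreal _ (Rmin_pos _ _ (cond_pos d) HK)); simpl.
  intros u v Hu Hv.
  specialize (Hd u v (Rlt_le_trans _ _ _ Hu (Rmin_l _ _))
    (Rlt_le_trans _ _ _ Hv (Rmin_l _ _))).
  rewrite DL_pol_1 in Hd.
  set (m := Rmax (Rabs (u - x)) (Rabs (v - y))) in *.
  assert (Hm : m < eps / (Rabs K + 1)).
  { unfold m; apply Rmax_lub_lt; eapply Rlt_le_trans; eauto; apply Rmin_r. }
  assert (Hm0 : 0 <= m) by (eapply Rle_trans; [apply Rabs_pos|apply Rmax_l]).
  assert (HKm : Rabs K * m <= eps).
  { apply Rlt_div_r in Hm; [|generalize (Rabs_pos K); lra].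
    generalize (Rabs_pos K); nra. }
  replace (f u v - f x y - (pd1 f x y * (u - x) + pd2 f x y * (v - y)))
    with (f u v - (f x y + (u - x) * pd1 f x y + (v - y) * pd2 f x y)) by ring.
  eapply Rle_trans; [exact Hd|].
  generalize (Rle_abs K); simpl; nra.
Qed.

Lemma smooth_on_schwarz D f x y : open2 D -> smooth_on D f -> D x y ->
  pd1 (pd2 f) x y = pd2 (pd1 f) x y.
Proof.
  intros HD Hf Hxy. unfold pd1, pd2. apply Schwarz.
  - destruct (proj1 (open2_locally_2d D) HD x y Hxy) as [del Hdel].
    exists del; intros u v Hu Hv; specialize (Hdel u v Hu Hv).
    destruct (smooth_on_partials_cont D f u v Hf Hdel) as [A [B _]].
    destruct (smooth_on_partials_cont D (pd2 f) u v (smooth_on_pd2 D f Hf) Hdel) as [C _].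
    destruct (smooth_on_partials_cont D (pd1 f) u v (smooth_on_pd1 D f Hf) Hdel)
      as [_ [E _]].
    repeat split; assumption.
  - exact (smooth_on_continuity D _ x y (smooth_on_pd1 D _ (smooth_on_pd2 D f Hf)) Hxy).
  - exact (smooth_on_continuity D _ x y (smooth_on_pd2 D _ (smooth_on_pd1 D f Hf)) Hxy).
Qed.

Inductive smooth_field_expr (U : R -> R -> Prop) : (R -> R -> R) -> Prop :=
  | sfe_smooth f : smooth_on U f -> smooth_field_expr U f
  | sfe_plus f g : smooth_field_expr U f -> smooth_field_expr U g ->
      smooth_field_expr U (fun a b => f a b + g a b)
  | sfe_mult f g : smooth_field_expr U f -> smooth_field_expr U g ->
      smooth_field_expr U (fun a b => f a b * g a b)
  | sfe_opp f : smooth_field_expr U f -> smooth_field_expr U (fun a b => - f a b)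
  | sfe_inv f : smooth_field_expr U f -> (forall a b, U a b -> f a b <> 0) ->
      smooth_field_expr U (fun a b => / f a b)
  | sfe_ext f g : smooth_field_expr U f -> (forall a b, U a b -> f a b = g a b) ->
      smooth_field_expr U g.

Section SmoothFieldExpr.
Variable U : R -> R -> Prop.
Hypothesis HU : open2 U.

Lemma smooth_field_expr_partials_cont f u v :
  smooth_field_expr U f -> U u v -> partials_cont_at f u v.
Proof.
  intros Hf; revert u v;
    induction Hf as [f Hf|f g _ IHf _ IHg|f g _ IHf _ IHg|f _ IHf|f _ IHf Hnz|f g _ IHf Hfg];
    intros u v Huv.
  - exact (smooth_on_partials_cont U f u v Hf Huv).
  - destruct (IHf u v Huv) as [A [B C]], (IHg u v Huv) as [A' [B' C']].
    split; [|split].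
    + exact (ex_derive_plus (fun t => f t v) (fun t => g t v) u A A').
    + exact (ex_derive_plus (fun t => f u t) (fun t => g u t) v B B').
    + exact (continuity_2d_pt_plus f g u v C C').
  - destruct (IHf u v Huv) as [A [B C]], (IHg u v Huv) as [A' [B' C']].
    split; [|split].
    + exact (ex_derive_mult (fun t => f t v) (fun t => g t v) u A A').
    + exact (ex_derive_mult (fun t => f u t) (fun t => g u t) v B B').
    + exact (continuity_2d_pt_mult f g u v C C').
  - destruct (IHf u v Huv) as [A [B C]].
    split; [|split].
    + exact (ex_derive_opp (fun t => f t v) u A).
    + exact (ex_derive_opp (fun t => f u t) v B).
    + exact (continuity_2d_pt_opp f u v C).
  - destruct (IHf u v Huv) as [A [B C]]. specialize (Hnz u v Huv).
    split; [|split].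
    + exact (ex_derive_inv (fun t => f t v) u A Hnz).
    + exact (ex_derive_inv (fun t => f u t) v B Hnz).
    + exact (continuity_2d_pt_inv f u v C Hnz).
  - exact (partials_cont_at_ext_on U f g u v HU Hfg Huv (IHf u v Huv)).
Qed.

Lemma smooth_field_expr_pd1 f : smooth_field_expr U f -> smooth_field_expr U (pd1 f).
Proof.
  intros Hf; induction Hf as
    [f Hf|f g Hf IHf Hg IHg|f g Hf IHf Hg IHg|f Hf IHf|f Hf IHf Hnz|f g Hf IHf Hfg].
  - exact (sfe_smooth U _ (smooth_on_pd1 U f Hf)).
  - apply sfe_ext with (1 := sfe_plus U _ _ IHf IHg).
    intros a b Hab; unfold pd1.
    destruct (smooth_field_expr_partials_cont f a b Hf Hab) as [A _].
    destruct (smooth_field_expr_partials_cont g a b Hg Hab) as [A' _].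
    symmetry; exact (Derive_plus (fun t => f t b) (fun t => g t b) a A A').
  - apply sfe_ext with
      (1 := sfe_plus U _ _ (sfe_mult U _ _ IHf Hg) (sfe_mult U _ _ Hf IHg)).
    intros a b Hab; unfold pd1.
    destruct (smooth_field_expr_partials_cont f a b Hf Hab) as [A _].
    destruct (smooth_field_expr_partials_cont g a b Hg Hab) as [A' _].
    symmetry; exact (Derive_mult (fun t => f t b) (fun t => g t b) a A A').
  - apply sfe_ext with (1 := sfe_opp U _ IHf).
    intros a b _; unfold pd1. symmetry; exact (Derive_opp (fun t => f t b) a).
  - pose (Hinv := sfe_inv U f Hf Hnz).
    apply sfe_ext with (1 := sfe_opp U _ (sfe_mult U _ _ (sfe_mult U _ _ IHf Hinv) Hinv)).
    intros a b Hab; unfold pd1.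
    destruct (smooth_field_expr_partials_cont f a b Hf Hab) as [A _].
    rewrite (Derive_inv (fun t => f t b) a A (Hnz a b Hab)). field. exact (Hnz a b Hab).
  - apply sfe_ext with (1 := IHf). intros a b Hab. exact (pd1_ext_on U f g a b HU Hfg Hab).
Qed.

Lemma smooth_field_expr_pd2 f : smooth_field_expr U f -> smooth_field_expr U (pd2 f).
Proof.
  intros Hf; induction Hf as
    [f Hf|f g Hf IHf Hg IHg|f g Hf IHf Hg IHg|f Hf IHf|f Hf IHf Hnz|f g Hf IHf Hfg].
  - exact (sfe_smooth U _ (smooth_on_pd2 U f Hf)).
  - apply sfe_ext with (1 := sfe_plus U _ _ IHf IHg).
    intros a b Hab; unfold pd2.
    destruct (smooth_field_expr_partials_cont f a b Hf Hab) as [_ [A _]].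
    destruct (smooth_field_expr_partials_cont g a b Hg Hab) as [_ [A' _]].
    symmetry; exact (Derive_plus (fun t => f a t) (fun t => g a t) b A A').
  - apply sfe_ext with
      (1 := sfe_plus U _ _ (sfe_mult U _ _ IHf Hg) (sfe_mult U _ _ Hf IHg)).
    intros a b Hab; unfold pd2.
    destruct (smooth_field_expr_partials_cont f a b Hf Hab) as [_ [A _]].
    destruct (smooth_field_expr_partials_cont g a b Hg Hab) as [_ [A' _]].
    symmetry; exact (Derive_mult (fun t => f a t) (fun t => g a t) b A A').
  - apply sfe_ext with (1 := sfe_opp U _ IHf).
    intros a b _; unfold pd2. symmetry; exact (Derive_opp (fun t => f a t) b).
  - pose (Hinv := sfe_inv U f Hf Hnz).
    apply sfe_ext with (1 := sfe_opp U _ (sfe_mult U _ _ (sfe_mult U _ _ IHf Hinv) Hinv)).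
    intros a b Hab; unfold pd2.
    destruct (smooth_field_expr_partials_cont f a b Hf Hab) as [_ [A _]].
    rewrite (Derive_inv (fun t => f a t) b A (Hnz a b Hab)). field. exact (Hnz a b Hab).
  - apply sfe_ext with (1 := IHf). intros a b Hab. exact (pd2_ext_on U f g a b HU Hfg Hab).
Qed.

Lemma smooth_field_expr_smooth f : smooth_field_expr U f -> smooth_on U f.
Proof.
  apply smooth_on_of_pd_closed.
  - intros g u v Hg Huv. exact (smooth_field_expr_partials_cont g u v Hg Huv).
  - exact smooth_field_expr_pd1.
  - exact smooth_field_expr_pd2.
Qed.

Lemma smooth_on_plus f g : smooth_on U f -> smooth_on U g ->
  smooth_on U (fun a b => f a b + g a b).
Proof.
  intros Hf Hg. apply smooth_field_expr_smooth, sfe_plus; apply sfe_smooth; assumption.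
Qed.

Lemma smooth_on_mult f g : smooth_on U f -> smooth_on U g ->
  smooth_on U (fun a b => f a b * g a b).
Proof.
  intros Hf Hg. apply smooth_field_expr_smooth, sfe_mult; apply sfe_smooth; assumption.
Qed.

Lemma smooth_on_opp f : smooth_on U f -> smooth_on U (fun a b => - f a b).
Proof. intros Hf. apply smooth_field_expr_smooth, sfe_opp, sfe_smooth, Hf. Qed.

Lemma smooth_on_inv f : smooth_on U f -> (forall a b, U a b -> f a b <> 0) ->
  smooth_on U (fun a b => / f a b).
Proof. intros Hf Hnz. apply smooth_field_expr_smooth, sfe_inv; [apply sfe_smooth|]; assumption. Qed.

End SmoothFieldExpr.

Lemma smooth_on_snd D : smooth_on D (fun _ v => v).
Proof.
  pose (affine_snd := fun f : R -> R -> R => exists a c, forall u v, f u v = a * v + c).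
  assert (Hpd1 : forall f, affine_snd f -> affine_snd (pd1 f)).
  { intros f [a [c Hf]]; exists 0, 0; intros u v; unfold pd1.
    rewrite (Derive_ext _ (fun _ => a * v + c)) by (intros; apply Hf).
    rewrite Derive_const; ring. }
  assert (Hpd2 : forall f, affine_snd f -> affine_snd (pd2 f)).
  { intros f [a [c Hf]]; exists 0, a; intros u v; unfold pd2.
    rewrite (Derive_ext _ (fun t => a * t + c)) by (intros; apply Hf).
    apply is_derive_unique; auto_derive; trivial; ring. }
  apply (smooth_on_of_pd_closed D affine_snd); [|exact Hpd1|exact Hpd2|].
  - intros f u v [a [c Hf]] _; split; [|split].
    + apply (ex_derive_ext (fun _ => a * v + c)); [intros; symmetry; apply Hf|].
      apply ex_derive_const.
    + apply (ex_derive_ext (fun t => a * t + c)); [intros; symmetry; apply Hf|].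
      auto_derive; trivial.
    + apply (continuity_2d_pt_ext (fun _ v => a * v + c)); [intros; symmetry; apply Hf|].
      apply continuity_2d_pt_plus; [|apply continuity_2d_pt_const].
      apply continuity_2d_pt_mult; [apply continuity_2d_pt_const|apply continuity_2d_pt_id2].
  - exists 1, 0; intros; ring.
Qed.

(* With [A = |e - L h|], [E = |e|], [H = |h|]: the linearisation error of [f]
   controls [A] up to [e' (H + E)], and [E <= A + L H] closes the loop. *)
Lemma implicit_error_bound q A E H L e' eps :
  0 < Rabs q -> 0 < H -> 0 < eps -> 0 <= A -> 0 <= E -> 0 <= L -> 0 <= e' ->
  Rabs q * A <= e' * (H + E) -> E <= A + L * H ->
  e' <= Rabs q / 2 -> e' <= eps * Rabs q / (2 * (2 * L + 2)) ->
  A < eps * H.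
Proof.
  intros Hq HH He HA HE0 HL He0 H1 H2 H3 H4.
  assert (HA2 : A <= (H + E) / 2).
  { apply Rmult_le_reg_l with (Rabs q); [exact Hq|].
    eapply Rle_trans; [exact H1|]. nra. }
  assert (HE : E <= (2 * L + 1) * H) by lra.
  assert (He' : e' * (2 * L + 2) <= eps * Rabs q / 2).
  { apply Rmult_le_compat_r with (r := 2 * L + 2) in H4; [|lra].
    replace (eps * Rabs q / (2 * (2 * L + 2)) * (2 * L + 2)) with (eps * Rabs q / 2)
      in H4 by (field; lra).
    exact H4. }
  assert (Hfin : Rabs q * A <= Rabs q * (eps * H / 2)).
  { eapply Rle_trans; [exact H1|].
    replace (Rabs q * (eps * H / 2)) with ((eps * Rabs q / 2) * H) by field.
    apply Rle_trans with (e' * (2 * L + 2) * H); [|apply Rmult_le_compat_r; lra].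
    nra. }
  apply Rmult_le_reg_l in Hfin; [|exact Hq]. nra.
Qed.

Lemma implicit_difference_quotient q L al h e e' eps :
  0 < eps -> q <> 0 -> h <> 0 -> Rabs al <= 1 -> 0 <= e' ->
  e' <= Rabs q / 2 -> e' <= eps * Rabs q / (2 * (2 * Rabs L + 2)) ->
  Rabs (q * (L * h - e)) <= e' * Rmax (Rabs (al * h)) (Rabs e) ->
  Rabs ((e - L * h) / h) < eps.
Proof.
  intros Heps Hq Hh Hal He0 H3 H4 Hlin.
  assert (HH : 0 < Rabs h) by (apply Rabs_pos_lt; exact Hh).
  rewrite Rabs_div by exact Hh. apply Rlt_div_l; [exact HH|].
  rewrite Rabs_mult, (Rabs_minus_sym (L * h) e) in Hlin.
  apply implicit_error_bound with q (Rabs e) (Rabs L) e';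
    [apply Rabs_pos_lt; exact Hq|exact HH|exact Heps|apply Rabs_pos|apply Rabs_pos
    |apply Rabs_pos|exact He0| | |exact H3|exact H4].
  - eapply Rle_trans; [exact Hlin|]. apply Rmult_le_compat_l; [exact He0|].
    apply Rmax_lub; [|generalize (Rabs_pos h); lra].
    rewrite Rabs_mult. generalize (Rabs_pos e) (Rabs_pos h) (Rabs_pos al). nra.
  - replace e with ((e - L * h) + L * h) at 1 by ring.
    eapply Rle_trans; [apply Rabs_triang|]. rewrite Rabs_mult. lra.
Qed.

Lemma is_derive_implicit (f : R -> R -> R) x y p q (g : R -> R) tau al be :
  q <> 0 -> differentiable_pt_lim f x y p q -> Rabs al <= 1 ->
  g tau = y -> continuity_pt g tau ->
  locally tau (fun t => f (x + al * (t - tau)) (g t) = f x y + be * (t - tau)) ->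
  is_derive g tau ((be - p * al) / q).
Proof.
  intros Hq Hd Hal Hg Hc Hloc.
  apply is_derive_Reals. intros eps Heps.
  set (L := (be - p * al) / q).
  assert (Hqa : 0 < Rabs q) by (apply Rabs_pos_lt; exact Hq).
  set (e' := Rmin (Rabs q / 2) (eps * Rabs q / (2 * (2 * Rabs L + 2)))).
  assert (He' : 0 < e').
  { unfold e'; apply Rmin_pos; [lra|].
    apply Rdiv_lt_0_compat; [nra|generalize (Rabs_pos L); lra]. }
  destruct (Hd (mkposreal e' He')) as [d1 Hd1].
  destruct (Hc d1 (cond_pos d1)) as [d2 [Hd2 Hc2]].
  destruct Hloc as [d3 Hd3].
  assert (Hdel : 0 < Rmin d1 (Rmin d2 d3)) by (repeat apply Rmin_pos; apply cond_pos || lra).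
  exists (mkposreal _ Hdel); simpl. intros h Hh0 Hh.
  generalize (Rmin_l d1 (Rmin d2 d3)) (Rmin_r d1 (Rmin d2 d3)) (Rmin_l d2 d3) (Rmin_r d2 d3).
  intros Hm1 Hm2 Hm3 Hm4.
  assert (Hline : f (x + al * h) (g (tau + h)) = f x y + be * h).
  { replace h with (tau + h - tau) at 1 3 by ring. apply Hd3.
    unfold ball; simpl; unfold AbsRing_ball, abs, minus, plus, opp; simpl.
    replace (tau + h + - tau) with h by ring. lra. }
  assert (Hge : Rabs (g (tau + h) - y) < d1).
  { rewrite <- Hg. apply Hc2. split; [split; [exact I|lra]|].
    unfold R_dist; simpl; unfold Rdist. replace (tau + h - tau) with h by ring. lra. }
  assert (Hah : Rabs (x + al * h - x) < d1).
  { replace (x + al * h - x) with (al * h) by ring. rewrite Rabs_mult.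
    generalize (Rabs_pos h) (Rabs_pos al); nra. }
  specialize (Hd1 _ _ Hah Hge); simpl in Hd1. rewrite Hline in Hd1.
  replace ((g (tau + h) - g tau) / h - L) with ((g (tau + h) - y - L * h) / h)
    by (rewrite Hg; field; exact Hh0).
  apply (implicit_difference_quotient q L al h _ e' eps Heps Hq Hh0 Hal);
    [lra|apply Rmin_l|apply Rmin_r|].
  replace (x + al * h - x) with (al * h) in Hd1 by ring.
  replace (q * (L * h - (g (tau + h) - y)))
    with (f x y + be * h - f x y - (p * (al * h) + q * (g (tau + h) - y)))
    by (unfold L; field; exact Hq).
  exact Hd1.
Qed.

Section LocalInverse.
Variables (f : R -> R -> R) (x0 y0 d s : R).
Hypothesis Hd : 0 < d.
Hypothesis Hs : Rabs s = 1.
Hypothesis Hbox : forall x y, Rabs (x - x0) < d -> Rabs (y - y0) < d ->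
  continuity_2d_pt f x y /\ is_derive (fun t => f x t) y (pd2 f x y) /\
  0 < s * pd2 f x y.

Let r := d / 2.

Definition ybox x y := Rabs (x - x0) < d /\ Rabs (y - y0) < r.

Definition yinv_dom x z :=
  Rabs (x - x0) < d /\ s * f x (y0 - r) < s * z < s * f x (y0 + r).

(* The witness is irrelevant outside [yinv_dom]. *)
Definition yinv x z := epsilon (inhabits 0) (fun y => Rabs (y - y0) < r /\ f x y = z).

Let lower_end : Rabs (y0 - r - y0) <= r.
Proof.
  replace (y0 - r - y0) with (- r) by ring.
  rewrite Rabs_Ropp, Rabs_right; unfold r; lra.
Qed.

Let upper_end : Rabs (y0 + r - y0) <= r.
Proof. replace (y0 + r - y0) with r by ring. rewrite Rabs_right; unfold r; lra. Qed.

Lemma scaled_lt x y1 y2 : Rabs (x - x0) < d ->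
  Rabs (y1 - y0) <= r -> Rabs (y2 - y0) <= r ->
  y1 < y2 -> s * f x y1 < s * f x y2.
Proof.
  intros Hx H1 H2 H12.
  assert (Hin : forall t, y0 - r <= t <= y0 + r -> Rabs (t - y0) < d).
  { intros t Ht. unfold r in Ht. apply Rabs_def1; lra. }
  apply Rabs_le_between in H1, H2.
  apply (incr_function_le (fun t => s * f x t) (Finite (y0 - r)) (Finite (y0 + r))
    (fun t => s * pd2 f x t)); simpl; try lra.
  - intros t Ht1 Ht2; simpl in Ht1, Ht2. apply is_derive_scal, Hbox; [exact Hx|apply Hin; lra].
  - intros t Ht1 Ht2; simpl in Ht1, Ht2. apply Hbox; [exact Hx|apply Hin; lra].
Qed.

Lemma scaled_le x y1 y2 : Rabs (x - x0) < d ->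
  Rabs (y1 - y0) <= r -> Rabs (y2 - y0) <= r ->
  y1 <= y2 -> s * f x y1 <= s * f x y2.
Proof. intros Hx H1 H2 [H|<-]; [left; apply scaled_lt|right]; auto. Qed.

Lemma f_inj_snd x y1 y2 : Rabs (x - x0) < d ->
  Rabs (y1 - y0) <= r -> Rabs (y2 - y0) <= r ->
  f x y1 = f x y2 -> y1 = y2.
Proof.
  intros Hx H1 H2 E. destruct (Rtotal_order y1 y2) as [L|[L|L]]; [|exact L|].
  - generalize (scaled_lt x y1 y2 Hx H1 H2 L). rewrite E; lra.
  - generalize (scaled_lt x y2 y1 Hx H2 H1 L). rewrite E; lra.
Qed.

Lemma Rabs_scaled a : Rabs (s * a) = Rabs a.
Proof. rewrite Rabs_mult, Hs; ring. Qed.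

Lemma between_locally_2d x z y1 y2 : Rabs (x - x0) < d ->
  Rabs (y1 - y0) <= r -> Rabs (y2 - y0) <= r ->
  s * f x y1 < s * z < s * f x y2 ->
  locally_2d (fun u w => Rabs (u - x0) < d /\ s * f u y1 < s * w < s * f u y2) x z.
Proof.
  intros Hx H1 H2 [Hz1 Hz2].
  set (g1 := (s * z - s * f x y1) / 2). set (g2 := (s * f x y2 - s * z) / 2).
  assert (Hg1 : 0 < g1) by (unfold g1; lra).
  assert (Hg2 : 0 < g2) by (unfold g2; lra).
  destruct (proj1 (Hbox x y1 Hx ltac:(unfold r in *; lra)) (mkposreal _ Hg1)) as [da Ha].
  destruct (proj1 (Hbox x y2 Hx ltac:(unfold r in *; lra)) (mkposreal _ Hg2)) as [db Hb].
  assert (Hdel : 0 < Rmin (Rmin da db) (Rmin (d - Rabs (x - x0)) (Rmin g1 g2))).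
  { repeat apply Rmin_pos; try apply cond_pos; lra. }
  exists (mkposreal _ Hdel); simpl. intros u w Hu Hw.
  repeat match goal with
  | H : Rabs _ < Rmin _ _ |- _ => apply Rmin_Rgt_l in H; destruct H
  | H : Rmin _ _ > Rabs _ |- _ => apply Rmin_Rgt_l in H; destruct H
  end.
  assert (Hy1 : Rabs (y1 - y1) < da) by (rewrite Rminus_diag, Rabs_R0; apply cond_pos).
  assert (Hy2 : Rabs (y2 - y2) < db) by (rewrite Rminus_diag, Rabs_R0; apply cond_pos).
  specialize (Ha u y1 ltac:(assumption) Hy1). specialize (Hb u y2 ltac:(assumption) Hy2).
  simpl in Ha, Hb.
  rewrite <- Rabs_scaled, Rmult_minus_distr_l in Ha, Hb.
  assert (Hsw : Rabs (s * w - s * z) < Rmin g1 g2).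
  { rewrite <- Rmult_minus_distr_l, Rabs_scaled. apply Rmin_glb_lt; assumption. }
  generalize (Rmin_l g1 g2) (Rmin_r g1 g2); intros Hm1 Hm2.
  apply Rabs_def2 in Ha, Hb, Hsw.
  split; [|unfold g1, g2 in *; lra].
  replace (u - x0) with ((u - x) + (x - x0)) by ring.
  eapply Rle_lt_trans; [apply Rabs_triang|]. lra.
Qed.

Lemma ybox_open : open2 ybox.
Proof.
  apply open2_locally_2d. intros x y [Hx Hy].
  assert (Hdel : 0 < Rmin (d - Rabs (x - x0)) (r - Rabs (y - y0))) by (apply Rmin_pos; lra).
  exists (mkposreal _ Hdel); simpl. intros u v Hu Hv.
  apply Rmin_Rgt_l in Hu, Hv. split.
  - replace (u - x0) with ((u - x) + (x - x0)) by ring.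
    eapply Rle_lt_trans; [apply Rabs_triang|]. lra.
  - replace (v - y0) with ((v - y) + (y - y0)) by ring.
    eapply Rle_lt_trans; [apply Rabs_triang|]. lra.
Qed.

Lemma yinv_dom_open : open2 yinv_dom.
Proof.
  apply open2_locally_2d. intros x z [Hx Hz].
  exact (between_locally_2d x z _ _ Hx lower_end upper_end Hz).
Qed.

Lemma ybox_yinv x y : ybox x y -> yinv_dom x (f x y) /\ yinv x (f x y) = y.
Proof.
  intros [Hx Hy]. apply Rabs_def2 in Hy as Hy'. split.
  - split; [exact Hx|]. split; apply scaled_lt; auto; lra.
  - unfold yinv.
    destruct (epsilon_spec (inhabits 0) (fun y' => Rabs (y' - y0) < r /\ f x y' = f x y))
      as [H1 H2]; [exists y; auto|].
    apply f_inj_snd with x; auto; lra.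
Qed.

Lemma yinv_dom_yinv x z : yinv_dom x z -> ybox x (yinv x z) /\ f x (yinv x z) = z.
Proof.
  intros [Hx [Hz1 Hz2]].
  assert (Ex : exists y, Rabs (y - y0) < r /\ f x y = z).
  { destruct (Ranalysis5.IVT_interv (fun t => s * f x t - s * z) (y0 - r) (y0 + r))
      as [y [Hy Hfy]]; simpl in *; try lra; try (unfold r; lra).
    - intros a Ha. apply continuity_pt_minus; [|apply continuity_pt_const; intros ? ?; auto].
      apply continuity_pt_scal, continuity_2d_pt_2, Hbox; [exact Hx|].
      apply Rabs_def1; unfold r in *; lra.
    - exists y.
      assert (Hsy : s * f x y = s * z) by lra.
      assert (Hs0 : s <> 0) by (intros E; rewrite E, Rabs_R0 in Hs; lra).
      split.
      + apply Rabs_def1; [destruct (Req_dec y (y0 + r))|destruct (Req_dec y (y0 - r))];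
          subst; lra.
      + now apply Rmult_eq_reg_l with s. }
  destruct (epsilon_spec (inhabits 0) (fun y => Rabs (y - y0) < r /\ f x y = z) Ex)
    as [H1 H2].
  split; [split|]; assumption.
Qed.

(* Monotonicity traps [yinv u w] in [(y - e, y + e)] once [f u (y -+ e)] bracket [w]. *)
Lemma yinv_continuity x z : yinv_dom x z -> continuity_2d_pt yinv x z.
Proof.
  intros HV. destruct (yinv_dom_yinv x z HV) as [[Hx Hy] Hf].
  set (y := yinv x z) in *.
  intros eps.
  set (e := Rmin eps (r - Rabs (y - y0)) / 2).
  assert (He : 0 < e).
  { unfold e; apply Rdiv_lt_0_compat; [apply Rmin_pos; [apply cond_pos|lra]|lra]. }
  assert (He1 : e < eps) by (generalize (Rmin_l eps (r - Rabs (y - y0))) (cond_pos eps); unfold e; lra).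
  assert (He2 : e < r - Rabs (y - y0)) by (generalize (Rmin_r eps (r - Rabs (y - y0))); unfold e; lra).
  generalize (Rle_abs (y - y0)) (Rabs_maj2 (y - y0)); intros Hy1 Hy2.
  assert (Hlo : Rabs (y - e - y0) <= r) by (apply Rabs_le; lra).
  assert (Hhi : Rabs (y + e - y0) <= r) by (apply Rabs_le; lra).
  assert (Hya : Rabs (y - y0) <= r) by lra.
  assert (Hs1 : s * f x (y - e) < s * z) by (rewrite <- Hf; apply scaled_lt; auto; lra).
  assert (Hs2 : s * z < s * f x (y + e)) by (rewrite <- Hf; apply scaled_lt; auto; lra).
  destruct (between_locally_2d x z (y - e) (y + e) Hx Hlo Hhi (conj Hs1 Hs2)) as [del Hdel].
  exists del. intros u w Hu Hw. destruct (Hdel u w Hu Hw) as [Hu0 [Hw1 Hw2]].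
  assert (HVuw : yinv_dom u w).
  { split; [exact Hu0|]. split.
    - eapply Rle_lt_trans; [|exact Hw1]. apply scaled_le; auto; lra.
    - eapply Rlt_le_trans; [exact Hw2|]. apply scaled_le; auto; lra. }
  destruct (yinv_dom_yinv u w HVuw) as [[_ Hy'] Hf'].
  set (y' := yinv u w) in *.
  assert (y - e < y').
  { destruct (Rlt_or_le (y - e) y') as [A|A]; [exact A|].
    assert (s * w <= s * f u (y - e)) by (rewrite <- Hf'; apply scaled_le; auto; lra).
    lra. }
  assert (y' < y + e).
  { destruct (Rlt_or_le y' (y + e)) as [A|A]; [exact A|].
    assert (s * f u (y + e) <= s * w) by (rewrite <- Hf'; apply scaled_le; auto; lra).
    lra. }
  fold y. apply Rabs_def1; lra.
Qed.

Hypothesis Hdiff : forall x y, ybox x y ->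
  differentiable_pt_lim f x y (pd1 f x y) (pd2 f x y).

Lemma ybox_pd2_neq0 x y : ybox x y -> pd2 f x y <> 0.
Proof.
  intros [Hx Hy] E. destruct (Hbox x y Hx) as [_ [_ H]]; [unfold r in *; lra|].
  rewrite E in H; lra.
Qed.

Lemma is_derive_yinv_1 x z : yinv_dom x z ->
  is_derive (fun t => yinv t z) x (- pd1 f x (yinv x z) / pd2 f x (yinv x z)).
Proof.
  intros HV. destruct (yinv_dom_yinv x z HV) as [HU Hf].
  assert (Hq := ybox_pd2_neq0 _ _ HU).
  replace (- pd1 f x (yinv x z) / pd2 f x (yinv x z))
    with ((0 - pd1 f x (yinv x z) * 1) / pd2 f x (yinv x z)) by (field; exact Hq).
  apply (is_derive_implicit f x (yinv x z)); auto.
  - rewrite Rabs_R1; lra.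
  - apply continuity_2d_pt_1, yinv_continuity, HV.
  - generalize (open2_locally_1 _ _ _ yinv_dom_open HV). apply filter_imp.
    intros t Ht; change R in t. replace (x + 1 * (t - x)) with t by ring.
    rewrite Hf, (proj2 (yinv_dom_yinv t z Ht)). ring.
Qed.

Lemma is_derive_yinv_2 x z : yinv_dom x z ->
  is_derive (fun t => yinv x t) z (/ pd2 f x (yinv x z)).
Proof.
  intros HV. destruct (yinv_dom_yinv x z HV) as [HU Hf].
  assert (Hq := ybox_pd2_neq0 _ _ HU).
  replace (/ pd2 f x (yinv x z))
    with ((1 - pd1 f x (yinv x z) * 0) / pd2 f x (yinv x z)) by (field; exact Hq).
  apply (is_derive_implicit f x (yinv x z)); auto.
  - rewrite Rabs_R0; lra.
  - apply continuity_2d_pt_2, yinv_continuity, HV.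
  - generalize (open2_locally_2 _ _ _ yinv_dom_open HV). apply filter_imp.
    intros t Ht; change R in t. replace (x + 0 * (t - z)) with x by ring.
    rewrite Hf, (proj2 (yinv_dom_yinv x t Ht)). ring.
Qed.

End LocalInverse.

Definition minimal_graph_lhs (phi : R -> R -> R) x y :=
  (1 - pd2 phi x y ^ 2) * pd1 (pd1 phi) x y
  + 2 * pd1 phi x y * pd2 phi x y * pd2 (pd1 phi) x y
  + (1 - pd1 phi x y ^ 2) * pd2 (pd2 phi) x y.

Section InverseInSecondVariable.
Variables (U V : R -> R -> Prop) (phi psi : R -> R -> R).
Hypothesis HU : open2 U.
Hypothesis HV : open2 V.
Hypothesis Hphi : smooth_on U phi.
Hypothesis Hq : forall x y, U x y -> pd2 phi x y <> 0.
Hypothesis HVU : forall x z, V x z -> U x (psi x z).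
Hypothesis Hc : forall x z, V x z -> continuity_2d_pt psi x z.

Definition inv_pd1 a b := - pd1 phi a b / pd2 phi a b.
Definition inv_pd2 a b := / pd2 phi a b.

Hypothesis Hdx : forall x z, V x z -> is_derive (fun t => psi t z) x (inv_pd1 x (psi x z)).
Hypothesis Hdz : forall x z, V x z -> is_derive (fun t => psi x t) z (inv_pd2 x (psi x z)).

Lemma smooth_on_inv_pd1 : smooth_on U inv_pd1.
Proof.
  apply (smooth_on_ext U (fun a b => - (pd1 phi a b * / pd2 phi a b))); [exact HU| |].
  - apply (smooth_on_opp U HU), (smooth_on_mult U HU); [apply smooth_on_pd1, Hphi|].
    apply (smooth_on_inv U HU); [apply smooth_on_pd2, Hphi|exact Hq].
  - intros a b _. unfold inv_pd1, Rdiv. ring.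
Qed.

Lemma smooth_on_inv_pd2 : smooth_on U inv_pd2.
Proof. apply smooth_on_inv; [exact HU|apply smooth_on_pd2, Hphi|exact Hq]. Qed.

Lemma is_derive_comp_1 H x z : smooth_on U H -> V x z ->
  is_derive (fun t => H t (psi t z)) x
    (pd1 H x (psi x z) + pd2 H x (psi x z) * inv_pd1 x (psi x z)).
Proof.
  intros HH Hxz. apply is_derive_Reals.
  rewrite <- (Rmult_1_r (pd1 H x (psi x z))).
  apply (derivable_pt_lim_comp_2d H (fun t => t) (fun t => psi t z)).
  - exact (smooth_on_differentiable U H x (psi x z) HU HH (HVU x z Hxz)).
  - apply derivable_pt_lim_id.
  - apply is_derive_Reals, Hdx, Hxz.
Qed.

Lemma is_derive_comp_2 H x z : smooth_on U H -> V x z ->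
  is_derive (fun t => H x (psi x t)) z (pd2 H x (psi x z) * inv_pd2 x (psi x z)).
Proof.
  intros HH Hxz. apply is_derive_Reals.
  replace (pd2 H x (psi x z) * inv_pd2 x (psi x z))
    with (pd1 H x (psi x z) * 0 + pd2 H x (psi x z) * inv_pd2 x (psi x z)) by ring.
  apply (derivable_pt_lim_comp_2d H (fun _ => x) (fun t => psi x t)).
  - exact (smooth_on_differentiable U H x (psi x z) HU HH (HVU x z Hxz)).
  - apply derivable_pt_lim_const.
  - apply is_derive_Reals, Hdz, Hxz.
Qed.

Lemma continuity_comp H x z : smooth_on U H -> V x z ->
  continuity_2d_pt (fun a b => H a (psi a b)) x z.
Proof.
  intros HH Hxz eps.
  destruct (smooth_on_continuity U H _ _ HH (HVU x z Hxz) eps) as [d1 Hd1].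
  destruct (Hc x z Hxz d1) as [d2 Hd2].
  exists (mkposreal _ (Rmin_pos _ _ (cond_pos d1) (cond_pos d2))); simpl.
  intros u w Hu Hw. apply Hd1.
  - eapply Rlt_le_trans; [exact Hu|apply Rmin_l].
  - apply Hd2; (eapply Rlt_le_trans; [eassumption|apply Rmin_r]).
Qed.

Lemma pd1_comp g H x z : smooth_on U H ->
  (forall x z, V x z -> g x z = H x (psi x z)) -> V x z ->
  pd1 g x z = pd1 H x (psi x z) + pd2 H x (psi x z) * inv_pd1 x (psi x z).
Proof.
  intros HH Hg Hxz. unfold pd1 at 1.
  rewrite (Derive_ext_loc (fun t => g t z) (fun t => H t (psi t z))).
  - apply is_derive_unique, is_derive_comp_1; assumption.
  - generalize (open2_locally_1 _ _ _ HV Hxz). apply filter_imp. intros t Ht. exact (Hg t z Ht).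
Qed.

Lemma pd2_comp g H x z : smooth_on U H ->
  (forall x z, V x z -> g x z = H x (psi x z)) -> V x z ->
  pd2 g x z = pd2 H x (psi x z) * inv_pd2 x (psi x z).
Proof.
  intros HH Hg Hxz. unfold pd2 at 1.
  rewrite (Derive_ext_loc (fun t => g x t) (fun t => H x (psi x t))).
  - apply is_derive_unique, is_derive_comp_2; assumption.
  - generalize (open2_locally_2 _ _ _ HV Hxz). apply filter_imp. intros t Ht. exact (Hg x t Ht).
Qed.

(* Functions of the form [H (x, psi (x, z))] with [H] smooth are closed under
   both partial derivatives by the chain rule. *)
Lemma smooth_on_inverse : smooth_on V psi.
Proof.
  pose (through_psi := fun g : R -> R -> R =>
    exists H, smooth_on U H /\ forall x z, V x z -> g x z = H x (psi x z)).
  apply (smooth_on_of_pd_closed V through_psi).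
  - intros g u v [H [HH Hg]] Huv.
    apply (partials_cont_at_ext_on V (fun a b => H a (psi a b))); [exact HV| |exact Huv|].
    + intros a b Hab; symmetry; exact (Hg a b Hab).
    + split; [|split].
      * eexists; apply is_derive_comp_1; assumption.
      * eexists; apply is_derive_comp_2; assumption.
      * apply continuity_comp; assumption.
  - intros g [H [HH Hg]].
    exists (fun a b => pd1 H a b + pd2 H a b * inv_pd1 a b); split.
    + apply smooth_on_plus; [exact HU|apply smooth_on_pd1, HH|].
      apply smooth_on_mult; [exact HU|apply smooth_on_pd2, HH|exact smooth_on_inv_pd1].
    + intros x z Hxz. exact (pd1_comp g H x z HH Hg Hxz).
  - intros g [H [HH Hg]].
    exists (fun a b => pd2 H a b * inv_pd2 a b); split.
    + apply smooth_on_mult; [exact HU|apply smooth_on_pd2, HH|exact smooth_on_inv_pd2].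
    + intros x z Hxz. exact (pd2_comp g H x z HH Hg Hxz).
  - exists (fun _ b => b). split; [apply smooth_on_snd|reflexivity].
Qed.

Section SecondDerivatives.
Variables x y : R.
Hypothesis Hxy : U x y.

Let q_neq0 := Hq x y Hxy.
Let pd1_partials := smooth_on_partials_cont U _ x y (smooth_on_pd1 U phi Hphi) Hxy.
Let pd2_partials := smooth_on_partials_cont U _ x y (smooth_on_pd2 U phi Hphi) Hxy.

Lemma pd1_inv_pd1 : pd1 inv_pd1 x y =
  - (pd1 (pd1 phi) x y * pd2 phi x y - pd1 phi x y * pd1 (pd2 phi) x y) / pd2 phi x y ^ 2.
Proof.
  destruct pd1_partials as [A1 _], pd2_partials as [B1 _].
  unfold pd1 at 1, inv_pd1.
  rewrite (Derive_div (fun t => - pd1 phi t y) (fun t => pd2 phi t y));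
    [|apply (ex_derive_opp (fun t => pd1 phi t y)), A1|exact B1|exact q_neq0].
  rewrite (Derive_opp (fun t => pd1 phi t y)).
  change (Derive (fun t => pd1 phi t y) x) with (pd1 (pd1 phi) x y).
  change (Derive (fun t => pd2 phi t y) x) with (pd1 (pd2 phi) x y).
  field; exact q_neq0.
Qed.

Lemma pd2_inv_pd1 : pd2 inv_pd1 x y =
  - (pd2 (pd1 phi) x y * pd2 phi x y - pd1 phi x y * pd2 (pd2 phi) x y) / pd2 phi x y ^ 2.
Proof.
  destruct pd1_partials as [_ [A2 _]], pd2_partials as [_ [B2 _]].
  unfold pd2 at 1, inv_pd1.
  rewrite (Derive_div (fun t => - pd1 phi x t) (fun t => pd2 phi x t));
    [|apply (ex_derive_opp (fun t => pd1 phi x t)), A2|exact B2|exact q_neq0].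
  rewrite (Derive_opp (fun t => pd1 phi x t)).
  change (Derive (fun t => pd1 phi x t) y) with (pd2 (pd1 phi) x y).
  change (Derive (fun t => pd2 phi x t) y) with (pd2 (pd2 phi) x y).
  field; exact q_neq0.
Qed.

Lemma pd2_inv_pd2 : pd2 inv_pd2 x y = - pd2 (pd2 phi) x y / pd2 phi x y ^ 2.
Proof.
  destruct pd2_partials as [_ [B2 _]].
  unfold pd2 at 1, inv_pd2.
  exact (Derive_inv (fun t => pd2 phi x t) y B2 q_neq0).
Qed.

End SecondDerivatives.

Lemma born_infeld_inverse :
  (forall x y, U x y -> minimal_graph_lhs phi x y = 0) -> born_infeld V psi.
Proof.
  intros Hmin x z Hxz.
  assert (P1 : forall a b, V a b -> pd1 psi a b = inv_pd1 a (psi a b)).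
  { intros a b Hab. apply is_derive_unique, Hdx, Hab. }
  assert (P2 : forall a b, V a b -> pd2 psi a b = inv_pd2 a (psi a b)).
  { intros a b Hab. apply is_derive_unique, Hdz, Hab. }
  rewrite (P1 x z Hxz), (P2 x z Hxz),
    (pd1_comp (pd1 psi) inv_pd1 x z smooth_on_inv_pd1 P1 Hxz),
    (pd2_comp (pd1 psi) inv_pd1 x z smooth_on_inv_pd1 P1 Hxz),
    (pd2_comp (pd2 psi) inv_pd2 x z smooth_on_inv_pd2 P2 Hxz).
  set (y := psi x z). assert (Hy : U x y) by exact (HVU x z Hxz).
  rewrite (pd1_inv_pd1 x y Hy), (pd2_inv_pd1 x y Hy), (pd2_inv_pd2 x y Hy),
    (smooth_on_schwarz U phi x y HU Hphi Hy).
  generalize (Hmin x y Hy), (Hq x y Hy). unfold minimal_graph_lhs, inv_pd1, inv_pd2.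
  intros E Hq0.
  transitivity (((1 - pd2 phi x y ^ 2) * pd1 (pd1 phi) x y
    + 2 * pd1 phi x y * pd2 phi x y * pd2 (pd1 phi) x y
    + (1 - pd1 phi x y ^ 2) * pd2 (pd2 phi) x y) / pd2 phi x y ^ 3).
  - field; exact Hq0.
  - rewrite E. field; exact Hq0.
Qed.

End InverseInSecondVariable.

Definition inverse_in_snd (U V : R -> R -> Prop) (phi psi : R -> R -> R) : Prop :=
  (forall x y, U x y -> V x (phi x y) /\ psi x (phi x y) = y) /\
  (forall x z, V x z -> U x (psi x z) /\ phi x (psi x z) = z).

Lemma pd2_sign_box Omega phi x0 y0 : open2 Omega -> smooth_on Omega phi ->
  Omega x0 y0 -> pd2 phi x0 y0 <> 0 ->
  exists d s, 0 < d /\ Rabs s = 1 /\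
    forall x y, Rabs (x - x0) < d -> Rabs (y - y0) < d ->
      Omega x y /\ 0 < s * pd2 phi x y.
Proof.
  intros HO Hphi H0 Hq0.
  set (q0 := pd2 phi x0 y0) in *.
  assert (Haq : 0 < Rabs q0) by (apply Rabs_pos_lt; exact Hq0).
  destruct (proj1 (open2_locally_2d Omega) HO x0 y0 H0) as [d1 Hd1].
  destruct (smooth_on_continuity Omega _ x0 y0 (smooth_on_pd2 Omega phi Hphi) H0
    (mkposreal (Rabs q0 / 2) ltac:(lra))) as [d2 Hd2].
  set (s := q0 / Rabs q0).
  assert (Hs : Rabs s = 1).
  { unfold s. rewrite Rabs_div, Rabs_Rabsolu by lra. field. lra. }
  assert (Hsq : s * q0 = Rabs q0).
  { unfold s. destruct (Rcase_abs q0) as [Hneg|Hpos];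
      [rewrite (Rabs_left q0 Hneg)|rewrite (Rabs_right q0 Hpos)]; field; lra. }
  exists (Rmin d1 d2), s.
  split; [apply Rmin_pos; apply cond_pos|split; [exact Hs|]].
  intros x y Hx Hy. split.
  - apply Hd1; (eapply Rlt_le_trans; [eassumption|apply Rmin_l]).
  - assert (Hclose : Rabs (s * (pd2 phi x y - q0)) < Rabs q0 / 2).
    { rewrite Rabs_mult, Hs, Rmult_1_l.
      apply Hd2; (eapply Rlt_le_trans; [eassumption|apply Rmin_r]). }
    apply Rabs_def2 in Hclose.
    replace (s * pd2 phi x y) with (s * (pd2 phi x y - q0) + s * q0) by ring. lra.
Qed.

Lemma born_infeld_local_inverse Omega phi x0 y0 : open2 Omega -> smooth_on Omega phi ->
  (forall x y, Omega x y -> minimal_graph_lhs phi x y = 0) ->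
  Omega x0 y0 -> pd2 phi x0 y0 <> 0 ->
  exists U, open2 U /\ U x0 y0 /\ (forall x y, U x y -> Omega x y) /\
    exists V psi, open2 V /\ smooth_on V psi /\ born_infeld V psi /\
      inverse_in_snd U V phi psi.
Proof.
  intros HO Hphi Hmin H0 Hq0.
  destruct (pd2_sign_box Omega phi x0 y0 HO Hphi H0 Hq0) as (d & s & Hd & Hs & Hsign).
  assert (Hbox : forall x y, Rabs (x - x0) < d -> Rabs (y - y0) < d ->
    continuity_2d_pt phi x y /\ is_derive (fun t => phi x t) y (pd2 phi x y) /\
    0 < s * pd2 phi x y).
  { intros x y Hx Hy. destruct (Hsign x y Hx Hy) as [Hxy Hpos].
    destruct (smooth_on_partials_cont Omega phi x y Hphi Hxy) as [_ [B C]].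
    split; [exact C|split; [apply Derive_correct, B|exact Hpos]]. }
  set (U := ybox x0 y0 d). set (V := yinv_dom phi x0 y0 d s). set (psi := yinv phi y0 d).
  assert (HUO : forall x y, U x y -> Omega x y).
  { intros x y [Hx Hy]. apply (Hsign x y Hx). lra. }
  assert (HU : open2 U) by apply ybox_open.
  assert (HV : open2 V) by exact (yinv_dom_open phi x0 y0 d s Hd Hs Hbox).
  assert (HphiU : smooth_on U phi) by exact (smooth_on_sub Omega U phi Hphi HUO).
  assert (Hdiff : forall x y, U x y -> differentiable_pt_lim phi x y (pd1 phi x y) (pd2 phi x y)).
  { intros x y Hxy. exact (smooth_on_differentiable Omega phi x y HO Hphi (HUO x y Hxy)). }
  assert (Hq : forall x y, U x y -> pd2 phi x y <> 0)
    by exact (ybox_pd2_neq0 phi x0 y0 d s Hd Hbox).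
  assert (HVU : forall x z, V x z -> U x (psi x z)).
  { intros x z Hxz. exact (proj1 (yinv_dom_yinv phi x0 y0 d s Hd Hs Hbox x z Hxz)). }
  pose proof (yinv_continuity phi x0 y0 d s Hd Hs Hbox) as Hc.
  pose proof (is_derive_yinv_1 phi x0 y0 d s Hd Hs Hbox Hdiff) as Hdx.
  pose proof (is_derive_yinv_2 phi x0 y0 d s Hd Hs Hbox Hdiff) as Hdz.
  exists U; split; [exact HU|split; [|split; [exact HUO|]]].
  { split; rewrite Rminus_diag, Rabs_R0; lra. }
  exists V, psi; split; [exact HV|split; [|split; [|split]]].
  - exact (smooth_on_inverse U V phi psi HU HV HphiU Hq HVU Hc Hdx Hdz).
  - apply (born_infeld_inverse U V phi psi HU HV HphiU Hq HVU Hdx Hdz).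
    intros x y Hxy. exact (Hmin x y (HUO x y Hxy)).
  - exact (ybox_yinv phi x0 y0 d s Hd Hbox).
  - exact (yinv_dom_yinv phi x0 y0 d s Hd Hs Hbox).
Qed.

Lemma Xu_graph_z phi : Xu (graph_z phi) = fun u v => (1, 0, pd1 phi u v).
Proof.
  apply functional_extensionality; intro u; apply functional_extensionality; intro v.
  cbv beta iota delta [Xu graph_z v1 v2 v3 pd1 fst snd].
  rewrite Derive_const, (Derive_id u : Derive (fun t => t) u = 1). reflexivity.
Qed.

Lemma Xv_graph_z phi : Xv (graph_z phi) = fun u v => (0, 1, pd2 phi u v).
Proof.
  apply functional_extensionality; intro u; apply functional_extensionality; intro v.
  cbv beta iota delta [Xv graph_z v1 v2 v3 pd2 fst snd].
  rewrite Derive_const, (Derive_id v : Derive (fun t => t) v = 1). reflexivity.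
Qed.

Lemma Xu_vertical (c1 c2 : R) h u v : Xu (fun a b => (c1, c2, h a b)) u v = (0, 0, pd1 h u v).
Proof. cbv beta iota delta [Xu v1 v2 v3 pd1 fst snd]. rewrite !Derive_const. reflexivity. Qed.

Lemma Xv_vertical (c1 c2 : R) h u v : Xv (fun a b => (c1, c2, h a b)) u v = (0, 0, pd2 h u v).
Proof. cbv beta iota delta [Xv v1 v2 v3 pd2 fst snd]. rewrite !Derive_const. reflexivity. Qed.

Lemma timelike_graph_z Omega phi u v : timelike_surface Omega (graph_z phi) -> Omega u v ->
  1 - pd1 phi u v ^ 2 - pd2 phi u v ^ 2 < 0.
Proof.
  intros Ht Huv. destruct (Ht u v Huv) as [_ Hlor].
  unfold fE, fF, fG in Hlor. rewrite Xu_graph_z, Xv_graph_z in Hlor.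
  cbv beta iota delta [ldot v1 v2 v3 fst snd] in Hlor. nra.
Qed.

(* For a graph the mean curvature is [minimal_graph_lhs] times a factor that
   the timelike condition keeps away from zero. *)
Lemma minimal_graph_z Omega phi u v : timelike_surface Omega (graph_z phi) ->
  minimal_surface Omega (graph_z phi) -> Omega u v -> minimal_graph_lhs phi u v = 0.
Proof.
  intros Ht Hm Huv. pose proof (timelike_graph_z Omega phi u v Ht Huv) as Hlor.
  generalize (Hm u v Huv).
  unfold mean_curvature, fE, fF, fG, sL, sM, sN, Xuu, Xuv, Xvv, unit_normal.
  rewrite Xu_graph_z, Xv_graph_z, Xu_vertical, !Xv_vertical.
  cbv beta iota delta [ldot lcross vscale v1 v2 v3 fst snd].
  unfold minimal_graph_lhs.
  set (p := pd1 phi u v) in *. set (q := pd2 phi u v) in *.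
  set (k := / sqrt (Rabs _)).
  assert (Hk : k <> 0).
  { apply Rinv_neq_0_compat, Rgt_not_eq, sqrt_lt_R0, Rabs_pos_lt. nra. }
  assert (Hden : / (2 * ((1 * 1 + 0 * 0 - p * p) * (0 * 0 + 1 * 1 - q * q)
    - (1 * 0 + 0 * 1 - p * q) ^ 2)) <> 0).
  { apply Rinv_neq_0_compat. nra. }
  intros E. unfold Rdiv in E. apply Rmult_integral in E as [E|E]; [|contradiction].
  apply (Rmult_eq_reg_l k); [|exact Hk]. rewrite Rmult_0_r, <- E. ring.
Qed.

Definition swap_args (f : R -> R -> R) : R -> R -> R := fun a b => f b a.

Definition flip_dir (d : dir) := match d with D1 => D2 | D2 => D1 end.

Lemma iter_pd_swap_args ds f :
  iter_pd ds (swap_args f) = swap_args (iter_pd (map flip_dir ds) f).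
Proof. induction ds as [|[] ds IH]; simpl; rewrite ?IH; reflexivity. Qed.

Lemma open2_swap D : open2 D -> open2 (fun a b => D b a).
Proof.
  intros HD. apply open2_locally_2d. intros x y Hxy.
  destruct (proj1 (open2_locally_2d D) HD y x Hxy) as [del Hdel].
  exists del. intros a b Ha Hb. exact (Hdel b a Hb Ha).
Qed.

Lemma smooth_on_swap_args D f :
  smooth_on D f -> smooth_on (fun a b => D b a) (swap_args f).
Proof.
  intros Hf. apply smooth_on_iff. intros ds u v Huv. rewrite iter_pd_swap_args.
  destruct (proj1 (smooth_on_iff D f) Hf (map flip_dir ds) v u Huv) as [A [B C]].
  split; [exact B|split; [exact A|]].
  intros eps. destruct (C eps) as [del Hdel]. exists del. intros a b Ha Hb. exact (Hdel b a Hb Ha).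
Qed.

Lemma minimal_graph_lhs_swap_args D phi x y : open2 D -> smooth_on D phi -> D y x ->
  minimal_graph_lhs (swap_args phi) x y = minimal_graph_lhs phi y x.
Proof.
  intros HD Hphi Hyx.
  change (minimal_graph_lhs (swap_args phi) x y) with
    ((1 - pd1 phi y x ^ 2) * pd2 (pd2 phi) y x
     + 2 * pd2 phi y x * pd1 phi y x * pd1 (pd2 phi) y x
     + (1 - pd2 phi y x ^ 2) * pd1 (pd1 phi) y x).
  rewrite (smooth_on_schwarz D phi y x HD Hphi Hyx).
  unfold minimal_graph_lhs. ring.
Qed.

Theorem lemma2p1 (Omega : R -> R -> Prop) (phi : R -> R -> R) :
  open2 Omega ->
  smooth_on Omega phi ->
  timelike_surface Omega (graph_z phi) ->
  minimal_surface Omega (graph_z phi) ->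
  forall x0 y0 : R, Omega x0 y0 ->
  exists U : R -> R -> Prop,
    open2 U /\ U x0 y0 /\ (forall x y, U x y -> Omega x y) /\
    exists (V : R -> R -> Prop) (psi : R -> R -> R),
      open2 V /\ smooth_on V psi /\ born_infeld V psi /\
      ( (* X(U) = { (x, psi(x,z), z) | (x,z) in V } *)
        ((forall x y, U x y -> V x (phi x y) /\ psi x (phi x y) = y) /\
         (forall x z, V x z -> U x (psi x z) /\ phi x (psi x z) = z))
      \/
        (* X(U) = { (psi(y,z), y, z) | (y,z) in V } *)
        ((forall x y, U x y -> V y (phi x y) /\ psi y (phi x y) = x) /\
         (forall y z, V y z -> U (psi y z) y /\ phi (psi y z) y = z)) ).
Proof.
  intros HO Hphi Ht Hm x0 y0 H0.
  pose proof (fun x y => minimal_graph_z Omega phi x y Ht Hm) as Hmin.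
  destruct (Req_dec (pd2 phi x0 y0) 0) as [Hq0|Hq0].
  - assert (Hp0 : pd2 (swap_args phi) y0 x0 <> 0).
    { intros Hp0. pose proof (timelike_graph_z Omega phi x0 y0 Ht H0) as Hlor.
      change (pd1 phi x0 y0 = 0) in Hp0. rewrite Hp0, Hq0 in Hlor. lra. }
    destruct (born_infeld_local_inverse (fun a b => Omega b a) (swap_args phi) y0 x0
      (open2_swap Omega HO) (smooth_on_swap_args Omega phi Hphi)) as
      (U & HU & HU0 & HUO & V & psi & HV & Hpsi & HBI & Hinv); [|exact H0|exact Hp0|].
    { intros a b Hba. rewrite (minimal_graph_lhs_swap_args Omega phi a b HO Hphi Hba).
      exact (Hmin b a Hba). }
    exists (fun x y => U y x); split; [exact (open2_swap U HU)|split; [exact HU0|split]].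
    + intros x y Hyx. exact (HUO y x Hyx).
    + exists V, psi. do 3 (split; [assumption|]). right.
      destruct Hinv as [Hfwd Hbwd]. split; [|exact Hbwd].
      intros x y Hyx. exact (Hfwd y x Hyx).
  - destruct (born_infeld_local_inverse Omega phi x0 y0 HO Hphi Hmin H0 Hq0) as
      (U & HU & HU0 & HUO & V & psi & HV & Hpsi & HBI & Hinv).
    exists U; do 3 (split; [assumption|]).
    exists V, psi. do 3 (split; [assumption|]). left. exact Hinv.
Qed.
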